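(* Let $S=(P,L)$ be a slim dense near hexagon and let $(R,\psi)$ be a non-abelian representation of $S$ with $\psi(x)=\langle r_x\rangle$. Let $x\in P$ and let $Y$ be a finite subset of $\Gamma_3(x)$. Then $[r_x,\prod_{y\in Y}r_y]=1$ (for the product taken in any order) if and only if $|Y|$ is even.
   Context: A slim partial linear space has exactly $3$ points per line (two distinct points on at most one line). $\Gamma_3(x)$ is the set of points at distance $3$ from $x$ in the collinearity graph. A near hexagon is a connected partial linear space of diameter $3$ with no point collinear with all others such that every point has a unique nearest point on every line. A quad is a convex subset of diameter $2$ in which no point is collinear with all others; the near hexagon is dense if any two points at distance $2$ lie in a quad. A representation $(R,\psi)$ of $S$ is a group $R$ with a map $\psi$ assigning to each point $x$ a subgroup $\psi(x)=\langle r_x\rangle$ of order $2$, such that $R$ is generated by the $r_x$ and, for every line $\{x,y,z\}$, $\{1,r_x,r_y,r_z\}$ is a Klein four subgroup; it is non-abelian if $R$ is. $[g,h]=g^{-1}h^{-1}gh$. *)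

From Stdlib Require Import List Arith.
Import ListNotations.

Set Implicit Arguments.

Section Geometry.
Variables (P L : Type) (I : P -> L -> Prop).

Definition slim_pls : Prop :=
  (forall l : L, exists a b c : P,
      a <> b /\ a <> c /\ b <> c /\ I a l /\ I b l /\ I c l /\
      (forall z, I z l -> z = a \/ z = b \/ z = c)) /\
  (forall (x y : P) (l m : L), x <> y -> I x l -> I y l -> I x m -> I y m -> l = m).

Definition collinear (x y : P) : Prop := x <> y /\ exists l, I x l /\ I y l.

Fixpoint walk (x : P) (p : list P) (y : P) : Prop :=
  match p with
  | [] => x = y
  | z :: p' => collinear x z /\ walk z p' y
  end.

Definition within (n : nat) (x y : P) : Prop :=
  exists p, length p <= n /\ walk x p y.

Definition dist_eq (x y : P) (n : nat) : Prop :=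
  within n x y /\ forall m, m < n -> ~ within m x y.

Definition connected : Prop := forall x y, exists n, within n x y.

Definition Gamma3 (x y : P) : Prop := dist_eq x y 3.

Definition convex (X : P -> Prop) : Prop :=
  forall x y n p, X x -> X y -> dist_eq x y n -> length p = n -> walk x p y ->
    forall z, In z p -> X z.

Definition diameter (X : P -> Prop) (d : nat) : Prop :=
  (forall x y, X x -> X y -> within d x y) /\
  (exists x y, X x /\ X y /\ dist_eq x y d).

Definition no_point_collinear_with_all (X : P -> Prop) : Prop :=
  ~ exists x, X x /\ forall y, X y -> y <> x -> collinear x y.

Definition quad (Q : P -> Prop) : Prop :=
  convex Q /\ diameter Q 2 /\ no_point_collinear_with_all Q.

Definition near_hexagon : Prop :=
  connected /\ diameter (fun _ => True) 3 /\
  no_point_collinear_with_all (fun _ => True) /\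
  (forall (x : P) (l : L), exists y, I y l /\
     forall z, I z l -> z <> y -> forall n, within n x z ->
       exists m, m < n /\ within m x y).

Definition dense : Prop :=
  forall x y, dist_eq x y 2 -> exists Q, quad Q /\ Q x /\ Q y.

Definition slim_dense_near_hexagon : Prop :=
  slim_pls /\ near_hexagon /\ dense.

End Geometry.

Record group (R : Type) := Group {
  gmul : R -> R -> R;
  gone : R;
  ginv : R -> R;
  gmulA : forall a b c, gmul a (gmul b c) = gmul (gmul a b) c;
  gmul1l : forall a, gmul gone a = a;
  gmul1r : forall a, gmul a gone = a;
  gmulVl : forall a, gmul (ginv a) a = gone;
  gmulVr : forall a, gmul a (ginv a) = gone
}.

Section GroupDefs.
Variables (R : Type) (G : group R).
Local Notation "a * b" := (gmul G a b).
Local Notation one := (gone G).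

Definition subgroup (S : R -> Prop) : Prop :=
  S one /\ (forall a b, S a -> S b -> S (a * b)) /\ (forall a, S a -> S (ginv G a)).

Definition generates (A : Type) (g : A -> R) : Prop :=
  forall S, subgroup S -> (forall a, S (g a)) -> forall h, S h.

Definition abelian : Prop := forall a b, a * b = b * a.

Definition comm (g h : R) : R := ginv G g * ginv G h * g * h.

Fixpoint gprod (s : list R) : R :=
  match s with [] => one | a :: s' => a * gprod s' end.

Definition klein4 (a b c : R) : Prop :=
  let X := fun g => g = one \/ g = a \/ g = b \/ g = c in
  one <> a /\ one <> b /\ one <> c /\ a <> b /\ a <> c /\ b <> c /\
  subgroup X /\ (forall g, X g -> g * g = one).

End GroupDefs.

(* representation (R, psi) of S with psi(x) = <r x> *)
Definition representation (P L : Type) (I : P -> L -> Prop)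
    (R : Type) (G : group R) (r : P -> R) : Prop :=
  (forall x, r x <> gone G /\ gmul G (r x) (r x) = gone G) /\
  generates G r /\
  (forall l x y z, I x l -> I y l -> I z l -> x <> y -> x <> z -> y <> z ->
      klein4 G (r x) (r y) (r z)).

From Stdlib Require Import List Arith Lia Relations Classical ClassicalEpsilon.
Import ListNotations.

(* Points at distance at most 2 have commuting involutions r_x, r_y: for collinear points
   this is the Klein four group of their line, and two points at distance 2 lie, together
   with two of their common neighbours, in a 3x3 grid whose lines force r_x r_y = r_y r_x.
   Hence moving y along a line inside Gamma_3(x) multiplies r_y by an element commuting
   with r_x and r_y, and since Gamma_3(x) is connected, [r_x, r_y] is a constant theta on
   it.  Three points pairwise at distance 3 give theta = theta^-1, and theta = 1 would make
   every r_w central, so R would be abelian.  Finally theta is an involution commuting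
   with every r_y, so [r_x, prod r_y] = theta^|Y|. *)

Set Implicit Arguments.
Unset Strict Implicit.

Section GroupFacts.
Variables (R : Type) (G : group R).
Local Notation "a * b" := (gmul G a b).
Local Notation one := (gone G).
Local Notation inv := (ginv G).

Lemma mulg_cancel_l a b c : a * b = a * c -> b = c.
Proof.
  intros H.
  rewrite <- (gmul1l G b), <- (gmul1l G c), <- (gmulVl G a), <- !gmulA, H.
  reflexivity.
Qed.

Lemma mulg_cancel_r a b c : b * a = c * a -> b = c.
Proof.
  intros H.
  rewrite <- (gmul1r G b), <- (gmul1r G c), <- (gmulVr G a), !gmulA, H.
  reflexivity.
Qed.

Lemma invg_unique a b : a * b = one -> inv a = b.
Proof. intros H. apply (mulg_cancel_l (a := a)). rewrite gmulVr. auto. Qed.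

Lemma invgM a b : inv (a * b) = inv b * inv a.
Proof.
  apply invg_unique.
  rewrite <- !gmulA, (gmulA G b), gmulVr, gmul1l, gmulVr. reflexivity.
Qed.

Lemma invgK a : inv (inv a) = a.
Proof. apply invg_unique, gmulVl. Qed.

Lemma invg_involution a : a * a = one -> inv a = a.
Proof. apply invg_unique. Qed.

Lemma commE_involution a b :
  a * a = one -> b * b = one -> comm G a b = a * (b * (a * b)).
Proof.
  intros Ha Hb. unfold comm.
  rewrite (invg_involution Ha), (invg_involution Hb), <- !gmulA. reflexivity.
Qed.

Lemma comm_eq1 a b : comm G a b = one <-> a * b = b * a.
Proof.
  unfold comm. split; intros H.
  - rewrite <- gmulA in H. apply invg_unique in H.
    rewrite invgM, !invgK in H. auto.
  - rewrite <- gmulA, H, <- invgM. apply gmulVl.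
Qed.

Lemma invg_comm a b : inv (comm G a b) = comm G b a.
Proof. unfold comm. rewrite !invgM, !invgK, !gmulA. reflexivity. Qed.

Lemma commMr a b c : comm G a (b * c) = comm G a c * (inv c * comm G a b * c).
Proof.
  unfold comm. rewrite invgM, <- !gmulA.
  rewrite (gmulA G c (inv c)), gmulVr, gmul1l, (gmulA G a (inv a)), gmulVr, gmul1l.
  reflexivity.
Qed.

Lemma centralizer_subgroup t : subgroup G (fun h => t * h = h * t).
Proof.
  split; [|split].
  - rewrite gmul1l, gmul1r. reflexivity.
  - intros a b Ha Hb. rewrite gmulA, Ha, <- gmulA, Hb, gmulA. reflexivity.
  - intros a Ha. apply (mulg_cancel_l (a := a)).
    rewrite gmulA, <- Ha, <- gmulA, gmulVr, gmul1r, gmulA, gmulVr, gmul1l.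
    reflexivity.
Qed.

Lemma gprod_closed S l : subgroup G S -> (forall b, In b l -> S b) -> S (gprod G l).
Proof.
  intros [S1 [SM _]]. induction l as [|b l IH]; intros Hl; simpl.
  - exact S1.
  - apply SM; [apply Hl; left | apply IH; intros c Hc; apply Hl; right]; auto.
Qed.

Lemma abelian_of_commuting_generators A (g : A -> R) :
  generates G g -> (forall i j, g i * g j = g j * g i) -> abelian G.
Proof.
  intros Hgen Hg.
  assert (Hcent : forall i h, g i * h = h * g i).
  { intros i. apply (Hgen _ (centralizer_subgroup (g i))). apply Hg. }
  intros h k. apply (Hgen _ (centralizer_subgroup h)).
  intros j. symmetry. apply Hcent.
Qed.

Lemma comm_mulr_central a b m :
  a * a = one -> b * b = one -> m * m = one -> a * m = m * a -> b * m = m * b ->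
  comm G a (b * m) = comm G a b.
Proof.
  intros Ha Hb Hm Ham Hbm.
  assert (Hbm2 : (b * m) * (b * m) = one).
  { rewrite <- gmulA, (gmulA G m), <- Hbm, <- gmulA, Hm, gmul1r. exact Hb. }
  rewrite (commE_involution Ha Hbm2), (commE_involution Ha Hb), <- !gmulA.
  do 2 f_equal.
  rewrite (gmulA G m a), <- Ham, <- gmulA. f_equal.
  rewrite (gmulA G m b), <- Hbm, <- gmulA, Hm, gmul1r. reflexivity.
Qed.

Lemma comm_involution_commute a b :
  a * a = one -> b * b = one -> comm G a b * comm G a b = one ->
  comm G a b * b = b * comm G a b.
Proof.
  intros Ha Hb Ht.
  assert (Hswap : comm G b a = comm G a b).
  { rewrite <- invg_comm. apply invg_involution, Ht. }
  rewrite <- Hswap at 1.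
  rewrite (commE_involution Hb Ha), (commE_involution Ha Hb), <- !gmulA.
  reflexivity.
Qed.

Lemma comm_gprod_parity a t l :
  a * a = one -> t * t = one ->
  (forall b, In b l -> b * b = one /\ comm G a b = t) ->
  comm G a (gprod G l) = if Nat.even (length l) then one else t.
Proof.
  intros Ha Ht. induction l as [|b l IH]; intros Hl; cbn [gprod length].
  - apply comm_eq1. rewrite gmul1l, gmul1r. reflexivity.
  - destruct (Hl b (or_introl eq_refl)) as [Hb Hab].
    assert (HtB : t * gprod G l = gprod G l * t).
    { apply (gprod_closed (centralizer_subgroup t)).
      intros c Hc. destruct (Hl c (or_intror Hc)) as [Hc2 <-].
      apply comm_involution_commute; auto. }
    assert (Hconj : inv (gprod G l) * t * gprod G l = t).
    { rewrite <- gmulA, HtB, gmulA, gmulVl, gmul1l. reflexivity. }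
    rewrite commMr, Hab, Hconj.
    rewrite IH by (intros c Hc; apply Hl; right; exact Hc).
    rewrite Nat.even_succ, <- Nat.negb_even.
    destruct (Nat.even (length l)); simpl; [apply gmul1l | exact Ht].
Qed.

(* X, Z, U, V are the values of r at two points at distance 2 and at two of their common
   neighbours; X U, Z V, X V, Z U are then the values at the third points of the four
   lines, which lie on two further lines meeting in the ninth point of a 3x3 grid. *)
Lemma grid_commute X Z U V :
  X * U = U * X -> X * V = V * X -> Z * U = U * Z -> Z * V = V * Z ->
  (X * U) * (Z * V) = (X * V) * (Z * U) -> (X * U) * (Z * V) = (Z * V) * (X * U) ->
  X * Z = Z * X.
Proof.
  intros XU XV ZU ZV Hrow Hcol.
  assert (K1 : U * (Z * V) = Z * (U * V)) by (rewrite !gmulA, ZU; reflexivity).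
  assert (K2 : V * (Z * U) = Z * (V * U)) by (rewrite !gmulA, ZV; reflexivity).
  assert (UV : U * V = V * U).
  { rewrite <- !gmulA, K1, K2 in Hrow. apply mulg_cancel_l, mulg_cancel_l in Hrow.
    exact Hrow. }
  assert (K3 : V * (X * U) = X * (U * V)) by (rewrite UV, !gmulA, XV; reflexivity).
  rewrite <- !gmulA, K1, K3, !gmulA in Hcol.
  apply mulg_cancel_r, mulg_cancel_r in Hcol. exact Hcol.
Qed.

End GroupFacts.

Section NearHexagon.
Variables (P L : Type) (I : P -> L -> Prop).
Hypothesis HS : slim_dense_near_hexagon I.

Lemma collinear_sym x y : collinear I x y -> collinear I y x.
Proof. intros [Hxy [l [Hx Hy]]]. split; [congruence | exists l; tauto]. Qed.

Lemma walk_app x p y q z : walk I x p y -> walk I y q z -> walk I x (p ++ q) z.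
Proof.
  revert x. induction p as [|a p IH]; simpl; intros x Hp Hq.
  - subst. exact Hq.
  - destruct Hp as [Hxa Hp]. split; [exact Hxa | exact (IH a Hp Hq)].
Qed.

Lemma within_rcons n x y z : within I n x y -> collinear I y z -> within I (S n) x z.
Proof.
  intros [p [Hp Hw]] Hc. exists (p ++ [z]). split.
  - rewrite length_app. simpl. lia.
  - apply walk_app with y; simpl; auto.
Qed.

Lemma within_mono n m x y : n <= m -> within I n x y -> within I m x y.
Proof. intros Hnm [p [Hp Hw]]. exists p. split; [lia | assumption]. Qed.

Lemma within_0 x y : within I 0 x y <-> x = y.
Proof.
  split.
  - intros [[|z p] [Hp Hw]]; [exact Hw | simpl in Hp; lia].
  - intros ->. exists []. simpl. auto.
Qed.

Lemma within_S n x y :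
  within I (S n) x y -> x = y \/ exists m, collinear I x m /\ within I n m y.
Proof.
  intros [[|z p] [Hp Hw]]; simpl in *.
  - left. exact Hw.
  - right. exists z. destruct Hw as [Hxz Hw]. split; [exact Hxz |].
    exists p. split; [lia | exact Hw].
Qed.

Lemma within_sym n x y : within I n x y -> within I n y x.
Proof.
  revert x. induction n as [|n IH]; intros x H.
  - apply within_0 in H. subst. apply within_0. reflexivity.
  - destruct (within_S H) as [->|[m [Hxm Hm]]].
    + apply within_mono with 0; [lia | apply within_0; reflexivity].
    + apply within_rcons with m; [apply IH, Hm | apply collinear_sym, Hxm].
Qed.

Lemma within_diameter x y : within I 3 x y.
Proof. destruct HS as [_ [[_ [[Hdiam _] _]] _]]. apply Hdiam; trivial. Qed.

(* Stopping at 3 is harmless because the diameter is 3, see [dist_spec]. *)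
Definition dist (x y : P) : nat :=
  if excluded_middle_informative (within I 0 x y) then 0 else
  if excluded_middle_informative (within I 1 x y) then 1 else
  if excluded_middle_informative (within I 2 x y) then 2 else 3.

Lemma dist_spec x y n : within I n x y <-> dist x y <= n.
Proof.
  unfold dist.
  destruct (excluded_middle_informative (within I 0 x y)) as [H0|H0];
  [| destruct (excluded_middle_informative (within I 1 x y)) as [H1|H1];
  [| destruct (excluded_middle_informative (within I 2 x y)) as [H2|H2]]].
  - split; [lia | intros; apply within_mono with 0; [lia | exact H0]].
  - split; [intros H; destruct n; [contradiction | lia] |].
    intros; apply within_mono with 1; [lia | exact H1].
  - split; [intros H; destruct n as [|[|n]]; [contradiction | contradiction | lia] |].
    intros; apply within_mono with 2; [lia | exact H2].
  - split; [intros H; destruct n as [|[|[|n]]]; solve [contradiction | lia] |].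
    intros; apply within_mono with 3; [lia | apply within_diameter].
Qed.

Lemma dist_le3 x y : dist x y <= 3.
Proof. apply dist_spec, within_diameter. Qed.

Lemma dist_sym x y : dist x y = dist y x.
Proof. apply Nat.le_antisymm; apply dist_spec, within_sym, dist_spec; lia. Qed.

Lemma dist_eq0 x y : dist x y = 0 <-> x = y.
Proof.
  rewrite <- within_0. split; intros H.
  - apply dist_spec. lia.
  - apply dist_spec in H. lia.
Qed.

Lemma dist_refl x : dist x x = 0.
Proof. apply dist_eq0. reflexivity. Qed.

Lemma dist_eq1 x y : dist x y = 1 <-> collinear I x y.
Proof.
  split.
  - intros H. assert (W : within I 1 x y) by (apply dist_spec; lia).
    destruct (within_S W) as [->|[m [Hym Hm]]].
    + rewrite dist_refl in H. discriminate.
    + apply within_0 in Hm. subst. exact Hym.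
  - intros Hc. assert (dist x y <= 1).
    { apply dist_spec. apply within_rcons with x; [apply within_0; reflexivity | exact Hc]. }
    assert (dist x y <> 0) by (rewrite dist_eq0; intros ->; destruct Hc; contradiction).
    lia.
Qed.

Lemma dist_triangle x y z : dist x z <= dist x y + dist y z.
Proof.
  apply dist_spec.
  destruct (proj2 (dist_spec x y _) (le_n _)) as [p [Hp Hwp]].
  destruct (proj2 (dist_spec y z _) (le_n _)) as [q [Hq Hwq]].
  exists (p ++ q). split; [rewrite length_app; lia | exact (walk_app Hwp Hwq)].
Qed.

Lemma dist_eqP x y n : dist_eq I x y n <-> dist x y = n.
Proof.
  split.
  - intros [Hn Hlt]. apply dist_spec in Hn.
    destruct (Nat.lt_ge_cases (dist x y) n) as [H|H]; [| lia].
    exfalso. apply (Hlt _ H), dist_spec. lia.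
  - intros <-. split; [apply dist_spec; lia |].
    intros m Hm Hw. apply dist_spec in Hw. lia.
Qed.

Lemma dist_geodesic_step x y k : dist x y = S k -> exists m, dist x m = 1 /\ dist m y = k.
Proof.
  intros Hxy. assert (W : within I (S k) x y) by (apply dist_spec; lia).
  destruct (within_S W) as [->|[m [Hxm Hm]]].
  - rewrite dist_refl in Hxy. discriminate.
  - apply dist_eq1 in Hxm. apply dist_spec in Hm. exists m. split; [exact Hxm |].
    pose proof (dist_triangle x m y). lia.
Qed.

Ltac dist_lia :=
  repeat match goal with
  | H : context [dist ?a ?b] |- _ =>
      lazymatch goal with
      | _ : dist a b = dist b a |- _ => fail
      | _ : dist b a = dist a b |- _ => fail
      | _ => pose proof (dist_sym a b)
      end
  | |- context [dist ?a ?b] =>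
      lazymatch goal with
      | _ : dist a b = dist b a |- _ => fail
      | _ : dist b a = dist a b |- _ => fail
      | _ => pose proof (dist_sym a b)
      end
  end; lia.

Definition line3 (a b c : P) : Prop :=
  a <> b /\ a <> c /\ b <> c /\ exists l, I a l /\ I b l /\ I c l.

Lemma line3_swap12 a b c : line3 a b c -> line3 b a c.
Proof. intros (Hab & Hac & Hbc & l & Hl). repeat split; try congruence. exists l. tauto. Qed.

Lemma line3_swap23 a b c : line3 a b c -> line3 a c b.
Proof. intros (Hab & Hac & Hbc & l & Hl). repeat split; try congruence. exists l. tauto. Qed.

Lemma line3_of_dist1 a b : dist a b = 1 -> exists c, line3 a b c.
Proof.
  intros Hab. apply dist_eq1 in Hab. destruct Hab as [Hab [l [Ha Hb]]].
  destruct HS as [[Hslim _] _].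
  destruct (Hslim l) as (a' & b' & c' & D1 & D2 & D3 & Ia & Ib & Ic & Hall).
  destruct (Hall a Ha) as [-> | [-> | ->]]; destruct (Hall b Hb) as [-> | [-> | ->]];
    try congruence;
    [exists c' | exists b' | exists c' | exists a' | exists b' | exists a'];
    repeat split; try congruence; exists l; tauto.
Qed.

Lemma line3_dist a b c : line3 a b c -> dist a b = 1 /\ dist a c = 1 /\ dist b c = 1.
Proof.
  intros (Hab & Hac & Hbc & l & Ha & Hb & Hc).
  repeat split; apply dist_eq1; (split; [assumption | exists l; tauto]).
Qed.

Lemma line3_nearest a b c w : line3 a b c ->
  (dist w b = S (dist w a) /\ dist w c = S (dist w a)) \/
  (dist w a = S (dist w b) /\ dist w c = S (dist w b)) \/
  (dist w a = S (dist w c) /\ dist w b = S (dist w c)).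
Proof.
  intros Habc. pose proof (line3_dist Habc) as (Dab & Dac & Dbc).
  destruct Habc as (Hab & Hac & Hbc & l & Ha & Hb & Hc).
  destruct HS as [[Hslim _] [[_ [_ [_ Hnear]]] _]].
  destruct (Hnear w l) as [y [Hy Hclosest]].
  assert (Hfar : forall z, I z l -> z <> y -> dist w z = S (dist w y)).
  { intros z Hz Hzy.
    destruct (Hclosest z Hz Hzy (dist w z)) as [m [Hm Hwm]]; [apply dist_spec; lia |].
    apply dist_spec in Hwm.
    assert (Hyz : dist y z = 1) by (apply dist_eq1; split; [congruence | exists l; tauto]).
    pose proof (dist_triangle w y z). lia. }
  destruct (Hslim l) as (a' & b' & c' & _ & _ & _ & _ & _ & _ & Hall).
  assert (Hy3 : y = a \/ y = b \/ y = c).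
  { destruct (Hall a Ha) as [-> | [-> | ->]]; destruct (Hall b Hb) as [-> | [-> | ->]];
      try congruence; destruct (Hall c Hc) as [-> | [-> | ->]]; try congruence;
      destruct (Hall y Hy) as [-> | [-> | ->]]; tauto. }
  destruct Hy3 as [-> | [-> | ->]]; [left | right; left | right; right];
    split; apply Hfar; auto.
Qed.

Ltac nearest w Hline :=
  let N := fresh "N" in
  pose proof (line3_nearest w Hline) as N;
  destruct N as [[? ?] | [[? ?] | [? ?]]]; try (exfalso; dist_lia).

Lemma line3_unique_third a b c d : line3 a b d -> dist c a = 1 -> dist c b = 1 -> c = d.
Proof.
  intros Hline Hca Hcb. nearest c Hline.
  apply dist_eq0. lia.
Qed.

Lemma quadrangle_thirds_collinear a b c d e f :
  dist a b = 1 -> dist b c = 1 -> dist c d = 1 -> dist d a = 1 ->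
  dist a c = 2 -> dist b d = 2 -> line3 a b e -> line3 c d f -> dist e f = 1.
Proof.
  intros Hab Hbc Hcd Hda Hac Hbd Labe Lcdf.
  pose proof (line3_dist Labe). pose proof (line3_dist Lcdf).
  nearest d Labe. nearest c Labe. nearest e Lcdf.
  dist_lia.
Qed.

Lemma common_neighbours_dist2 x z u1 u2 :
  dist x z = 2 -> u1 <> u2 -> dist x u1 = 1 -> dist u1 z = 1 ->
  dist x u2 = 1 -> dist u2 z = 1 -> dist u1 u2 = 2.
Proof.
  intros Hxz Hne H1 H2 H3 H4.
  assert (dist u1 u2 <> 0) by (rewrite dist_eq0; exact Hne).
  assert (dist u1 u2 <> 1).
  { intros H12. destruct (line3_of_dist1 H12) as [w Lw].
    assert (x = w) by (apply (line3_unique_third Lw); dist_lia).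
    assert (z = w) by (apply (line3_unique_third Lw); dist_lia).
    subst. rewrite dist_refl in Hxz. discriminate. }
  pose proof (dist_triangle u2 x u1).
  dist_lia.
Qed.

Lemma second_common_neighbour x z u y :
  dist x z = 2 -> dist x u = 1 -> dist u z = 1 ->
  dist u y = 2 -> dist x y = 1 -> dist z y = 2 ->
  exists t, t <> u /\ dist x t = 1 /\ dist t z = 1.
Proof.
  intros Hxz Hxu Huz Huy Hxy Hzy.
  destruct (line3_of_dist1 Huz) as [z1 Luz]. destruct (line3_of_dist1 Hxy) as [t Lxy].
  pose proof (line3_dist Luz). pose proof (line3_dist Lxy).
  nearest y Luz. nearest x Luz.
  assert (Htz : dist t z = 1).
  { apply (quadrangle_thirds_collinear (a := x) (b := y) (c := z1) (d := u));
      try assumption; try dist_lia.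
    apply line3_swap12, line3_swap23, Luz. }
  exists t. split; [| dist_lia].
  intros ->. dist_lia.
Qed.

Lemma common_neighbour_shift x z u y :
  dist x z = 2 -> dist x u = 1 -> dist u z = 1 ->
  dist u y = 2 -> dist x y = 2 -> dist z y = 2 ->
  exists s, dist u s = 2 /\ dist x s = 1 /\ dist z s = 2.
Proof.
  intros Hxz Hxu Huz Huy Hxy Hzy.
  destruct (line3_of_dist1 Hxu) as [x1 Lxu]. destruct (line3_of_dist1 Huz) as [z1 Luz].
  pose proof (line3_dist Lxu). pose proof (line3_dist Luz).
  nearest y Lxu. nearest z Lxu.
  nearest y Luz. nearest x Luz.
  nearest x1 Luz.
  assert (Hz1y : dist z1 y = 1) by dist_lia.
  destruct (line3_of_dist1 Hz1y) as [s Lzy]. pose proof (line3_dist Lzy).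
  nearest u Lzy. nearest z Lzy.
  assert (Hxs : dist x s = 1).
  { apply (quadrangle_thirds_collinear (a := x1) (b := u) (c := z1) (d := y));
      try assumption; try dist_lia.
    apply line3_swap12, line3_swap23, line3_swap12, Lxu. }
  exists s. dist_lia.
Qed.

Lemma quad_point_off_neighbour x z u :
  dist x z = 2 -> dist x u = 1 -> dist u z = 1 ->
  exists y, dist u y = 2 /\ dist x y <= 2 /\ dist z y <= 2.
Proof.
  intros Hxz Hxu Huz. destruct HS as [_ [_ Hdense]].
  destruct (Hdense x z (proj2 (dist_eqP x z 2) Hxz))
    as [Q [[Hconv [[Hdiam _] Hnocol]] [Qx Qz]]].
  assert (Qu : Q u).
  { apply (Hconv x z 2 [u; z] Qx Qz (proj2 (dist_eqP x z 2) Hxz) eq_refl).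
    - simpl. rewrite <- !dist_eq1. split; [exact Hxu |]. split; [exact Huz | reflexivity].
    - simpl. auto. }
  destruct (classic (exists y, Q y /\ y <> u /\ ~ collinear I u y))
    as [[y (Qy & Hyu & Hcol)] | Hall].
  - exists y. rewrite <- dist_eq1 in Hcol.
    assert (dist u y <> 0) by (rewrite dist_eq0; congruence).
    assert (dist u y <= 2) by (apply dist_spec, Hdiam; assumption).
    split; [lia |]. split; apply dist_spec, Hdiam; assumption.
  - exfalso. apply Hnocol. exists u. split; [exact Qu |].
    intros y Qy Hyu. apply NNPP. intros Hcol. apply Hall. exists y. auto.
Qed.

Lemma two_common_neighbours x z :
  dist x z = 2 -> exists u1 u2, u1 <> u2 /\
    dist x u1 = 1 /\ dist u1 z = 1 /\ dist x u2 = 1 /\ dist u2 z = 1.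
Proof.
  intros Hxz. destruct (dist_geodesic_step Hxz) as [u [Hxu Huz]].
  assert (Hsecond : exists t, t <> u /\ dist x t = 1 /\ dist t z = 1).
  { destruct (quad_point_off_neighbour Hxz Hxu Huz) as [y (Huy & Hxy & Hzy)].
    pose proof (dist_triangle y x u).
    pose proof (dist_triangle y z u).
    assert (dist x y = 1 \/ dist x y = 2) as [Hxy1 | Hxy2] by dist_lia;
      (assert (dist z y = 1 \/ dist z y = 2) as [Hzy1 | Hzy2] by dist_lia).
    - exists y. split; [intros ->; rewrite dist_refl in Huy; discriminate | dist_lia].
    - exact (second_common_neighbour Hxz Hxu Huz Huy Hxy1 Hzy2).
    - destruct (@second_common_neighbour z x u y) as [t (Htu & Hzt & Htx)]; try dist_lia.
      exists t. split; [exact Htu | dist_lia].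
    - destruct (common_neighbour_shift Hxz Hxu Huz Huy Hxy2 Hzy2) as [s (Hus & Hxs & Hzs)].
      exact (second_common_neighbour Hxz Hxu Huz Hus Hxs Hzs). }
  destruct Hsecond as [t (Htu & Hxt & Htz)].
  exists u, t. auto.
Qed.

Lemma quadrangle_grid x z u1 u2 p s t q :
  dist x z = 2 -> u1 <> u2 -> dist x u1 = 1 -> dist u1 z = 1 ->
  dist x u2 = 1 -> dist u2 z = 1 ->
  line3 x u1 p -> line3 z u2 s -> line3 x u2 t -> line3 z u1 q ->
  exists c, line3 p s c /\ line3 t q c.
Proof.
  intros Hxz Hne H1 H2 H3 H4 Lp Ls Lt Lq.
  pose proof (common_neighbours_dist2 Hxz Hne H1 H2 H3 H4).
  pose proof (line3_dist Lp). pose proof (line3_dist Ls).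
  pose proof (line3_dist Lt). pose proof (line3_dist Lq).
  assert (Hps : dist p s = 1)
    by (apply (quadrangle_thirds_collinear (a := x) (b := u1) (c := z) (d := u2));
        dist_lia || assumption).
  assert (Htq : dist t q = 1)
    by (apply (quadrangle_thirds_collinear (a := x) (b := u2) (c := z) (d := u1));
        dist_lia || assumption).
  destruct (line3_of_dist1 Hps) as [c Lc]. pose proof (line3_dist Lc).
  nearest u2 Lp. nearest x Ls. nearest z Lp. nearest u1 Ls.
  assert (Htc : dist t c = 1).
  { apply (quadrangle_thirds_collinear (a := u2) (b := x) (c := p) (d := s));
      try dist_lia; [apply line3_swap12, Lt | exact Lc]. }
  assert (Hqc : dist q c = 1)
    by (apply (quadrangle_thirds_collinear (a := z) (b := u1) (c := p) (d := s));
        dist_lia || assumption).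
  destruct (line3_of_dist1 Htq) as [c' Lc'].
  assert (c = c') by (apply (line3_unique_third Lc'); dist_lia).
  subst c'. exists c. auto.
Qed.

Lemma quadrangle_far_path x y v u1 u2 :
  dist x y = 3 -> 2 <= dist x v -> dist y v = 2 -> u1 <> u2 ->
  dist y u1 = 1 -> dist u1 v = 1 -> dist y u2 = 1 -> dist u2 v = 1 ->
  dist x u1 = 2 -> dist x u2 = 2 ->
  dist x v = 3 /\ exists y1 s, dist y y1 = 1 /\ dist y1 s = 1 /\ dist s v = 1 /\
    dist x y1 = 3 /\ dist x s = 3.
Proof.
  intros Hxy Hxv Hyv Hne H1 H2 H3 H4 Hxu1 Hxu2.
  pose proof (common_neighbours_dist2 Hyv Hne H1 H2 H3 H4).
  destruct (line3_of_dist1 H1) as [y1 Ly].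
  destruct (line3_of_dist1 (eq_trans (dist_sym v u2) H4)) as [s Ls].
  pose proof (line3_dist Ly). pose proof (line3_dist Ls).
  assert (Hys : dist y1 s = 1)
    by (apply (quadrangle_thirds_collinear (a := y) (b := u1) (c := v) (d := u2));
        dist_lia || assumption).
  pose proof (dist_triangle x s y1). pose proof (dist_le3 x y1). pose proof (dist_le3 x s).
  nearest x Ly. nearest x Ls.
  split; [lia |]. exists y1, s. repeat split; dist_lia.
Qed.

Lemma far_common_neighbour x y v :
  dist x y = 3 -> dist x v = 2 -> dist y v = 2 ->
  exists w, dist y w = 1 /\ dist w v = 1 /\ dist x w = 3.
Proof.
  intros Hxy Hxv Hyv.
  destruct (two_common_neighbours Hyv) as (u1 & u2 & Hne & H1 & H2 & H3 & H4).
  pose proof (dist_triangle x u1 y). pose proof (dist_triangle x u2 y).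
  pose proof (dist_le3 x u1). pose proof (dist_le3 x u2).
  destruct (Nat.eq_dec (dist x u1) 3) as [E1 | E1]; [exists u1; auto |].
  destruct (Nat.eq_dec (dist x u2) 3) as [E2 | E2]; [exists u2; auto |].
  exfalso.
  destruct (@quadrangle_far_path x y v u1 u2) as [Hv _]; try exact Hne; dist_lia.
Qed.

Definition far_step (x a b : P) : Prop := dist x a = 3 /\ dist x b = 3 /\ dist a b = 1.

Lemma far_connected_le2 x y y' :
  dist x y = 3 -> dist x y' = 3 -> dist y y' <= 2 -> clos_refl_trans P (far_step x) y y'.
Proof.
  intros Hy Hy' Hyy'.
  assert (dist y y' = 0 \/ dist y y' = 1 \/ dist y y' = 2) as [E | [E | E]] by lia.
  - apply dist_eq0 in E. subst. apply rt_refl.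
  - apply rt_step. repeat split; assumption.
  - destruct (two_common_neighbours E) as (u1 & u2 & Hne & H1 & H2 & H3 & H4).
    pose proof (dist_triangle x u1 y). pose proof (dist_triangle x u2 y).
    pose proof (dist_le3 x u1). pose proof (dist_le3 x u2).
    destruct (Nat.eq_dec (dist x u1) 3) as [E1 | E1].
    { apply rt_trans with u1; apply rt_step; repeat split; assumption. }
    destruct (Nat.eq_dec (dist x u2) 3) as [E2 | E2].
    { apply rt_trans with u2; apply rt_step; repeat split; assumption. }
    destruct (@quadrangle_far_path x y y' u1 u2)
      as [_ (y1 & s & Hyy1 & Hy1s & Hsy' & Hxy1 & Hxs)]; try dist_lia; [exact Hne |].
    apply rt_trans with y1; [apply rt_step; repeat split; assumption |].
    apply rt_trans with s; apply rt_step; repeat split; dist_lia.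
Qed.

Lemma far_connected x y y' :
  dist x y = 3 -> dist x y' = 3 -> clos_refl_trans P (far_step x) y y'.
Proof.
  intros Hy Hy'. pose proof (dist_le3 y y').
  destruct (Nat.eq_dec (dist y y') 3) as [E | E]; [| apply far_connected_le2; auto; lia].
  destruct (dist_geodesic_step (eq_trans (dist_sym y' y) E)) as [v [Hy'v Hvy]].
  pose proof (dist_triangle x v y'). pose proof (dist_le3 x v).
  destruct (Nat.eq_dec (dist x v) 3) as [F | F].
  - apply rt_trans with v; [apply far_connected_le2; dist_lia |].
    apply rt_step. repeat split; dist_lia.
  - destruct (@far_common_neighbour x y v) as (w & Hyw & Hwv & Hxw); try dist_lia.
    pose proof (dist_triangle y' v w).
    apply rt_trans with w; [apply rt_step; repeat split; assumption |].
    apply far_connected_le2; dist_lia.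
Qed.

Lemma far_neighbour_of_close x v y :
  dist x v = 2 -> dist x y = 3 -> dist y v <= 2 -> exists w, dist v w = 1 /\ dist x w = 3.
Proof.
  intros Hxv Hxy Hyv.
  assert (dist y v <> 0) by (rewrite dist_eq0; intros ->; lia).
  destruct (Nat.eq_dec (dist y v) 1) as [E | E].
  - exists y. split; [dist_lia | exact Hxy].
  - destruct (@far_common_neighbour x y v) as (w & _ & Hwv & Hxw); try lia.
    exists w. split; [dist_lia | exact Hxw].
Qed.

Lemma far_neighbour_of_collinear x v v' :
  dist x v = 2 -> dist v v' = 1 -> (exists w, dist v' w = 1 /\ dist x w = 3) ->
  exists w, dist v w = 1 /\ dist x w = 3.
Proof.
  intros Hxv Hvv' [w [Hv'w Hxw]].
  apply (far_neighbour_of_close Hxv Hxw).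
  pose proof (dist_triangle w v' v). dist_lia.
Qed.

Lemma far_neighbour x y v :
  dist x y = 3 -> dist x v = 2 -> exists w, dist v w = 1 /\ dist x w = 3.
Proof.
  intros Hxy Hxv. pose proof (dist_le3 y v).
  destruct (Nat.eq_dec (dist y v) 3) as [E | E]; [| apply (far_neighbour_of_close Hxv Hxy); lia].
  destruct (dist_geodesic_step E) as [b [Hyb Hbv]].
  assert (Hvia : forall u, dist v u = 1 -> dist u b = 1 -> dist x u <> 1 ->
                   exists w, dist v w = 1 /\ dist x w = 3).
  { intros u Hvu Hub Hxu. pose proof (dist_triangle x u v). pose proof (dist_le3 x u).
    destruct (Nat.eq_dec (dist x u) 3) as [F | F]; [exists u; auto |].
    apply (far_neighbour_of_collinear Hxv Hvu), (far_neighbour_of_close (y := y)); try dist_lia.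
    pose proof (dist_triangle y b u). dist_lia. }
  destruct (two_common_neighbours (eq_trans (dist_sym v b) Hbv))
    as (u1 & u2 & Hne & H1 & H2 & H3 & H4).
  destruct (Nat.eq_dec (dist x u1) 1) as [E1 | E1]; [| exact (Hvia u1 H1 H2 E1)].
  destruct (Nat.eq_dec (dist x u2) 1) as [E2 | E2]; [| exact (Hvia u2 H3 H4 E2)].
  (* Both common neighbours of v and b are collinear with x; the opposite side v1 b1 of the
     grid they span lies in Gamma_2(x) and links v to b. *)
  pose proof (common_neighbours_dist2 (eq_trans (dist_sym v b) Hbv) Hne H1 H2 H3 H4).
  destruct (line3_of_dist1 H1) as [v1 Lv].
  destruct (line3_of_dist1 (eq_trans (dist_sym b u2) H4)) as [b1 Lb].
  pose proof (line3_dist Lv). pose proof (line3_dist Lb).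
  assert (Hvb : dist v1 b1 = 1)
    by (apply (quadrangle_thirds_collinear (a := v) (b := u1) (c := b) (d := u2));
        dist_lia || assumption).
  pose proof (dist_triangle x b y). pose proof (dist_triangle x u2 b).
  nearest x Lv. nearest x Lb.
  apply (far_neighbour_of_collinear (v' := v1)); [exact Hxv | dist_lia |].
  apply (far_neighbour_of_collinear (v' := b1)); [dist_lia | exact Hvb |].
  apply (far_neighbour_of_close (y := y)); try dist_lia.
  pose proof (dist_triangle y b b1). dist_lia.
Qed.

Lemma far_point_at_distance2 x y : dist x y = 3 -> exists v, dist x v = 3 /\ dist y v = 2.
Proof.
  intros Hxy.
  destruct (dist_geodesic_step (eq_trans (dist_sym y x) Hxy)) as [m [Hym Hmx]].
  destruct (line3_of_dist1 Hym) as [y2 Ly]. pose proof (line3_dist Ly).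
  pose proof (dist_le3 x y2). nearest x Ly.
  destruct (@dist_geodesic_step x y2 2) as [b [Hxb Hby2]]; [dist_lia |].
  destruct (two_common_neighbours (eq_trans (dist_sym y2 b) Hby2))
    as (a1 & a2 & Hne & Ha1 & Ha1b & Ha2 & Ha2b).
  assert (Hn : exists n, dist y2 n = 1 /\ dist x n = 2 /\ n <> m).
  { pose proof (dist_triangle x a1 y2). pose proof (dist_triangle x a2 y2).
    pose proof (dist_triangle x b a1). pose proof (dist_triangle x b a2).
    destruct (classic (a1 = m)) as [-> | Hne1].
    - exists a2. split; [exact Ha2 |]. split; [dist_lia | congruence].
    - exists a1. split; [exact Ha1 |]. split; [dist_lia | exact Hne1]. }
  destruct Hn as (n & Hy2n & Hxn & Hnm).
  assert (Hyn : dist y n = 2).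
  { assert (dist y n <> 0) by (rewrite dist_eq0; intros ->; lia).
    assert (dist y n <> 1).
    { intros Hyn. apply Hnm, (line3_unique_third (line3_swap23 Ly)); dist_lia. }
    pose proof (dist_triangle y y2 n). dist_lia. }
  destruct (line3_of_dist1 Hy2n) as [n' Ln]. pose proof (line3_dist Ln).
  pose proof (dist_le3 x n'). nearest y Ln. nearest x Ln.
  exists n'. split; dist_lia.
Qed.

Lemma far_from_both x y : dist x y = 3 -> exists z, dist x z = 3 /\ dist y z = 3.
Proof.
  intros Hxy. destruct (far_point_at_distance2 Hxy) as [v [Hxv Hyv]].
  destruct (@far_neighbour y x v) as [z1 [Hvz1 Hyz1]]; [dist_lia | exact Hyv |].
  destruct (line3_of_dist1 Hvz1) as [z2 Lz]. pose proof (line3_dist Lz).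
  pose proof (dist_le3 x z1). pose proof (dist_le3 x z2). pose proof (dist_le3 y z2).
  nearest y Lz. nearest x Lz; [exists z2 | exists z1]; split; dist_lia.
Qed.

Section Representation.
Variables (R : Type) (G : group R) (r : P -> R).
Hypothesis Hrep : representation I G r.
Local Notation "a * b" := (gmul G a b).
Local Notation one := (gone G).

Lemma r_involution x : r x * r x = one.
Proof. destruct Hrep as [Hinv _]. apply Hinv. Qed.

Lemma r_line a b c : line3 a b c -> r a * r b = r c.
Proof.
  intros (Hab & Hac & Hbc & l & Ha & Hb & Hc). destruct Hrep as [_ [_ Hklein]].
  destruct (Hklein l a b c Ha Hb Hc Hab Hac Hbc)
    as (N1 & N2 & N3 & N4 & N5 & N6 & [_ [Hclosed _]] & _).
  destruct (Hclosed (r a) (r b)) as [E | [E | [E | E]]]; try tauto.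
  - exfalso. apply N4. rewrite <- (invg_involution (r_involution a)). apply invg_unique, E.
  - exfalso. apply N2. apply (mulg_cancel_l (G := G) (a := r a)). rewrite gmul1r. auto.
  - exfalso. apply N1. apply (mulg_cancel_r (G := G) (a := r b)). rewrite gmul1l. auto.
Qed.

Lemma r_commute_dist1 a b : dist a b = 1 -> r a * r b = r b * r a.
Proof.
  intros Hab. destruct (line3_of_dist1 Hab) as [c Labc].
  rewrite (r_line Labc), (r_line (line3_swap12 Labc)). reflexivity.
Qed.

Lemma r_commute_dist2 x z : dist x z = 2 -> r x * r z = r z * r x.
Proof.
  intros Hxz. destruct (two_common_neighbours Hxz) as (u1 & u2 & Hne & H1 & H2 & H3 & H4).
  destruct (line3_of_dist1 H1) as [p Lp]. destruct (line3_of_dist1 H3) as [t Lt].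
  destruct (line3_of_dist1 (eq_trans (dist_sym z u2) H4)) as [s Ls].
  destruct (line3_of_dist1 (eq_trans (dist_sym z u1) H2)) as [q Lq].
  destruct (quadrangle_grid Hxz Hne H1 H2 H3 H4 Lp Ls Lt Lq) as [c [Lpsc Ltqc]].
  apply (grid_commute (U := r u1) (V := r u2)); try (apply r_commute_dist1; dist_lia).
  - rewrite (r_line Lp), (r_line Ls), (r_line Lt), (r_line Lq), (r_line Lpsc), (r_line Ltqc).
    reflexivity.
  - rewrite (r_line Lp), (r_line Ls). apply r_commute_dist1, (line3_dist Lpsc).
Qed.

Lemma r_commute_le2 x z : dist x z <= 2 -> r x * r z = r z * r x.
Proof.
  intros Hxz. assert (dist x z = 0 \/ dist x z = 1 \/ dist x z = 2) as [E | [E | E]] by lia.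
  - apply dist_eq0 in E. subst. reflexivity.
  - apply r_commute_dist1, E.
  - apply r_commute_dist2, E.
Qed.

Lemma comm_r_far_step x y y' : far_step x y y' -> comm G (r x) (r y') = comm G (r x) (r y).
Proof.
  intros (Hy & Hy' & Hyy'). destruct (line3_of_dist1 Hyy') as [m Lm].
  pose proof (line3_dist Lm). pose proof (dist_le3 x m). nearest x Lm.
  rewrite <- (r_line (line3_swap23 Lm)).
  apply comm_mulr_central; try apply r_involution.
  - apply r_commute_le2. lia.
  - apply r_commute_dist1. dist_lia.
Qed.

Lemma comm_r_const x y y' :
  dist x y = 3 -> dist x y' = 3 -> comm G (r x) (r y) = comm G (r x) (r y').
Proof.
  intros Hy Hy'. pose proof (far_connected Hy Hy') as Hpath. clear Hy Hy'.
  induction Hpath as [a b Hab | a | a b c _ IHab _ IHbc].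
  - symmetry. apply comm_r_far_step, Hab.
  - reflexivity.
  - congruence.
Qed.

Lemma comm_r_involution x y :
  dist x y = 3 -> comm G (r x) (r y) * comm G (r x) (r y) = one.
Proof.
  intros Hxy. destruct (far_from_both Hxy) as [z [Hxz Hyz]].
  assert (Ex : comm G (r x) (r y) = comm G (r x) (r z)) by (apply comm_r_const; assumption).
  assert (Ey : comm G (r y) (r z) = comm G (r y) (r x)) by (apply comm_r_const; dist_lia).
  assert (Ez : comm G (r z) (r x) = comm G (r z) (r y)) by (apply comm_r_const; dist_lia).
  assert (Hinv : ginv G (comm G (r x) (r y)) = comm G (r x) (r y)).
  { rewrite Ex at 1.
    rewrite invg_comm, Ez, <- (invg_comm G (r y) (r z)), Ey, <- (invg_comm G (r x) (r y)).
    apply invgK. }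
  rewrite <- Hinv at 2. apply gmulVr.
Qed.

Definition central (z : P) : Prop := forall w, r z * r w = r w * r z.

Lemma central_of_comm_far z w : dist z w = 3 -> comm G (r z) (r w) = one -> central z.
Proof.
  intros Hzw Hc u. pose proof (dist_le3 z u).
  destruct (Nat.eq_dec (dist z u) 3) as [E | E].
  - apply comm_eq1. rewrite (comm_r_const E Hzw). exact Hc.
  - apply r_commute_le2. lia.
Qed.

Lemma central_far z z' : central z -> dist z' z = 3 -> central z'.
Proof.
  intros Cz Hz'z. apply (central_of_comm_far Hz'z), comm_eq1. symmetry. apply Cz.
Qed.

Lemma central_line a b c : central a -> central b -> line3 a b c -> central c.
Proof.
  intros Ca Cb Labc w. rewrite <- (r_line Labc).
  rewrite <- gmulA, (Cb w), gmulA, (Ca w), <- gmulA. reflexivity.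
Qed.

Lemma all_central_of_comm_far x y :
  dist x y = 3 -> comm G (r x) (r y) = one -> forall w, central w.
Proof.
  intros Hxy Hc.
  assert (Cx : central x) by exact (central_of_comm_far Hxy Hc).
  assert (Cy : central y) by (apply (central_far Cx); dist_lia).
  intros w. pose proof (dist_le3 x w).
  assert (dist x w = 0 \/ dist x w = 1 \/ dist x w = 2 \/ dist x w = 3)
    as [E | [E | [E | E]]] by lia.
  - apply dist_eq0 in E. subst. exact Cx.
  - destruct (line3_of_dist1 E) as [w' Lw]. pose proof (line3_dist Lw).
    pose proof (dist_le3 y w). pose proof (dist_le3 y w').
    nearest y Lw.
    + apply (central_line Cx (b := w')); [| apply line3_swap23, Lw].
      apply (central_far Cy). dist_lia.
    + apply (central_far Cy). dist_lia.
  - destruct (far_neighbour Hxy E) as [y1 [Hwy1 Hxy1]].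
    destruct (line3_of_dist1 Hwy1) as [y2 Ly]. pose proof (line3_dist Ly).
    pose proof (dist_le3 x y2). nearest x Ly.
    apply (central_line (a := y1) (b := y2)); [| | apply line3_swap23, line3_swap12, Ly];
      apply (central_far Cx); dist_lia.
  - apply (central_far Cx). dist_lia.
Qed.

Lemma comm_r_neq1 x y : ~ abelian G -> dist x y = 3 -> comm G (r x) (r y) <> one.
Proof.
  intros Hna Hxy Hc. apply Hna. destruct Hrep as [_ [Hgen _]].
  apply (abelian_of_commuting_generators Hgen).
  intros i j. apply (all_central_of_comm_far Hxy Hc).
Qed.

End Representation.

End NearHexagon.

Unset Implicit Arguments.
Set Strict Implicit.

Theorem lemma4p5 (P L : Type) (I : P -> L -> Prop)
  (HS : slim_dense_near_hexagon I)
  (R : Type) (G : group R) (r : P -> R)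
  (Hrep : representation I G r) (Hna : ~ abelian G)
  (x : P) (Y : list P) (HY : NoDup Y) (HY3 : forall y, In y Y -> Gamma3 I x y) :
  comm G (r x) (gprod G (map r Y)) = gone G <-> Nat.even (length Y) = true.
Proof.
  destruct Y as [|y0 Y0].
  - simpl. split; [reflexivity | intros _]. apply comm_eq1. rewrite gmul1l, gmul1r. reflexivity.
  - assert (Hfar : forall y, In y (y0 :: Y0) -> dist I x y = 3)
      by (intros y Hy; apply (dist_eqP HS), HY3, Hy).
    assert (Hy0 : dist I x y0 = 3) by (apply Hfar; left; reflexivity).
    rewrite (comm_gprod_parity (t := comm G (r x) (r y0))).
    + rewrite length_map. destruct (Nat.even (length (y0 :: Y0))).
      * tauto.
      * split; [intros Hc; contradiction (comm_r_neq1 HS Hrep Hna Hy0 Hc) | discriminate].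
    + apply (r_involution Hrep).
    + exact (comm_r_involution HS Hrep Hy0).
    + intros b Hb. apply in_map_iff in Hb. destruct Hb as [y [<- Hy]].
      split; [apply (r_involution Hrep) |].
      apply (comm_r_const HS Hrep); [apply Hfar, Hy | exact Hy0].
Qed.
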